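(* The group \(\mathcal{G}=\langle x,y,t \mid x^7, y^2, (xy)^3, [x,y]^4, t^2, [t^{x^2},yx^{-1}], [t,y], (yt^{x^2})^5, (xyx^2t^x)^5, (xt)^8\rangle\) is perfect.
   Context: Conventions: \(a^g=g^{-1}ag\) and \([a,b]=a^{-1}b^{-1}ab\). A group is perfect if it equals its commutator subgroup. *)

(* The finitely presented group
   G = < x, y, t | relators > is modelled as words in the letters
   x^{+-1}, y^{+-1}, t^{+-1} modulo the congruence generated by free
   cancellation and insertion/deletion of relators (i.e. the free group
   modulo the normal closure of the relators). *)
From Stdlib Require Import List.
Import ListNotations.

Inductive gen : Type := GX | GY | GT.

(* a letter: generator with exponent sign; true = inverse *)
Definition letter : Type := (gen * bool)%type.
Definition word : Type := list letter.

Definition inv_letter (l : letter) : letter := (fst l, negb (snd l)).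
Definition winv (w : word) : word := rev (map inv_letter w).

Definition x : word := [(GX, false)].
Definition y : word := [(GY, false)].
Definition t : word := [(GT, false)].

Fixpoint wpow (w : word) (n : nat) : word :=
  match n with 0 => [] | S k => w ++ wpow w k end.

(* conventions: a^g = g^-1 a g,  [a,b] = a^-1 b^-1 a b *)
Definition wconj (a g : word) : word := winv g ++ a ++ g.
Definition wcomm (a b : word) : word := winv a ++ winv b ++ a ++ b.

Definition relators : list word :=
  [ wpow x 7;
    wpow y 2;
    wpow (x ++ y) 3;
    wpow (wcomm x y) 4;
    wpow t 2;
    wcomm (wconj t (wpow x 2)) (y ++ winv x);
    wcomm t y;
    wpow (y ++ wconj t (wpow x 2)) 5;
    wpow (x ++ y ++ wpow x 2 ++ wconj t x) 5;
    wpow (x ++ t) 8 ].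

Inductive geq : word -> word -> Prop :=
  | geq_refl w : geq w w
  | geq_sym u v : geq u v -> geq v u
  | geq_trans u v w : geq u v -> geq v w -> geq u w
  | geq_cancel u v l : geq (u ++ [l; inv_letter l] ++ v) (u ++ v)
  | geq_rel u v r : In r relators -> geq (u ++ r ++ v) (u ++ v).

Definition prod_comm (cs : list (word * word)) : word :=
  concat (map (fun p => wcomm (fst p) (snd p)) cs).

(* G is perfect: G = [G,G], i.e. every element of G lies in the subgroup
   generated by commutators; since [a,b]^-1 = [b,a], that subgroup consists
   exactly of finite products of commutators. *)
Definition perfect_G : Prop :=
  forall w : word, exists cs : list (word * word), geq w (prod_comm cs).

(* A word whose exponent sums in x, y, t
   all vanish is a product of commutators: moving a letter next to its inverse
   costs one conjugate of a commutator, and then the pair cancels.  Modulo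
   commutators the relators give 7x = 0, 3x + 3y = 0, 2y = 0, 2t = 0,
   5y + 5t = 0 and 15x + 5y + 5t = 0, whence x = 0 (15 - 14 = 1), then y = 0
   (3 - 2 = 1) and t = 0 (5 - 4 = 1); so every generator is, modulo the
   relators, a word with zero exponent sums. *)
From Stdlib Require Import List ZArith Lia.
Import ListNotations.

Lemma inv_letter_involutive l : inv_letter (inv_letter l) = l.
Proof. destruct l as [g b]; unfold inv_letter; simpl; rewrite Bool.negb_involutive; reflexivity. Qed.

Lemma winv_app a b : winv (a ++ b) = winv b ++ winv a.
Proof. unfold winv; rewrite map_app, rev_app_distr; reflexivity. Qed.

Lemma winv_involutive a : winv (winv a) = a.
Proof.
  unfold winv; rewrite map_rev, rev_involutive, map_map.
  induction a as [|l a IH]; simpl; [reflexivity | rewrite inv_letter_involutive, IH; reflexivity].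
Qed.

Lemma geq_congr a b u v : geq a b -> geq (u ++ a ++ v) (u ++ b ++ v).
Proof.
  intros H; revert u v; induction H as [w|a b _ IH|a b c _ IH1 _ IH2|p q l|p q r Hr];
    intros u' v'.
  - apply geq_refl.
  - apply geq_sym, IH.
  - eapply geq_trans; [apply IH1 | apply IH2].
  - replace (u' ++ (p ++ [l; inv_letter l] ++ q) ++ v')
      with ((u' ++ p) ++ [l; inv_letter l] ++ (q ++ v')) by (rewrite !app_assoc; reflexivity).
    replace (u' ++ (p ++ q) ++ v') with ((u' ++ p) ++ q ++ v') by (rewrite !app_assoc; reflexivity).
    apply geq_cancel.
  - replace (u' ++ (p ++ r ++ q) ++ v')
      with ((u' ++ p) ++ r ++ (q ++ v')) by (rewrite !app_assoc; reflexivity).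
    replace (u' ++ (p ++ q) ++ v') with ((u' ++ p) ++ q ++ v') by (rewrite !app_assoc; reflexivity).
    apply geq_rel, Hr.
Qed.

Lemma geq_app a a' b b' : geq a a' -> geq b b' -> geq (a ++ b) (a' ++ b').
Proof.
  intros Ha Hb; eapply geq_trans.
  - exact (geq_congr a a' [] b Ha).
  - pose proof (geq_congr b b' a' [] Hb) as H; rewrite !app_nil_r in H; exact H.
Qed.

Lemma geq_cancel_word p s q : geq (p ++ s ++ winv s ++ q) (p ++ q).
Proof.
  revert p q; induction s as [|l s IH]; intros p q; [apply geq_refl|].
  change (l :: s) with ([l] ++ s); rewrite winv_app.
  eapply geq_trans.
  - replace (p ++ ([l] ++ s) ++ (winv s ++ winv [l]) ++ q)
      with ((p ++ [l]) ++ s ++ winv s ++ ([inv_letter l] ++ q)) by (rewrite !app_assoc; reflexivity).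
    apply IH.
  - replace ((p ++ [l]) ++ [inv_letter l] ++ q) with (p ++ [l; inv_letter l] ++ q)
      by (rewrite <- !app_assoc; reflexivity).
    apply geq_cancel.
Qed.

Lemma geq_winv_trivial r : geq r [] -> geq (winv r) [].
Proof.
  intros H; eapply geq_trans.
  - pose proof (geq_congr [] r [] (winv r) (geq_sym _ _ H)) as H'; simpl in H'; exact H'.
  - pose proof (geq_cancel_word [] r []) as H'; rewrite !app_nil_r in H'; exact H'.
Qed.

Definition in_derived_subgroup (w : word) : Prop :=
  exists cs, geq w (prod_comm cs).

Lemma in_derived_subgroup_geq a b : geq a b -> in_derived_subgroup b -> in_derived_subgroup a.
Proof. intros H [cs Hcs]; exists cs; eapply geq_trans; eassumption. Qed.

Lemma in_derived_subgroup_app a b :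
  in_derived_subgroup a -> in_derived_subgroup b -> in_derived_subgroup (a ++ b).
Proof.
  intros [cs1 H1] [cs2 H2]; exists (cs1 ++ cs2).
  unfold prod_comm; rewrite map_app, concat_app; apply geq_app; assumption.
Qed.

Lemma in_derived_subgroup_conj_comm a b v : in_derived_subgroup (wconj (wcomm a b) v).
Proof.
  exists [(wconj a v, wconj b v)]; unfold prod_comm, wcomm, wconj; simpl.
  rewrite app_nil_r, !winv_app, !winv_involutive; apply geq_sym.
  rewrite <- !app_assoc.
  eapply geq_trans.
  { replace (winv v ++ winv a ++ v ++ winv v ++ winv b ++ v ++ winv v ++ a ++ v ++ winv v ++ b ++ v)
      with ((winv v ++ winv a) ++ v ++ winv v ++ (winv b ++ v ++ winv v ++ a ++ v ++ winv v ++ b ++ v))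
      by (rewrite <- !app_assoc; reflexivity).
    apply geq_cancel_word. }
  eapply geq_trans.
  { replace ((winv v ++ winv a) ++ winv b ++ v ++ winv v ++ a ++ v ++ winv v ++ b ++ v)
      with ((winv v ++ winv a ++ winv b) ++ v ++ winv v ++ (a ++ v ++ winv v ++ b ++ v))
      by (rewrite <- !app_assoc; reflexivity).
    apply geq_cancel_word. }
  eapply geq_trans.
  { replace ((winv v ++ winv a ++ winv b) ++ a ++ v ++ winv v ++ b ++ v)
      with ((winv v ++ winv a ++ winv b ++ a) ++ v ++ winv v ++ (b ++ v))
      by (rewrite <- !app_assoc; reflexivity).
    apply geq_cancel_word. }
  rewrite <- !app_assoc; apply geq_refl.
Qed.

(* u b a v = (u a b v) [b,a]^v *)
Lemma in_derived_subgroup_swap u a b v :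
  in_derived_subgroup (u ++ a ++ b ++ v) -> in_derived_subgroup (u ++ b ++ a ++ v).
Proof.
  intros H.
  apply (in_derived_subgroup_geq _ ((u ++ a ++ b ++ v) ++ wconj (wcomm b a) v)).
  2: apply in_derived_subgroup_app; [exact H | apply in_derived_subgroup_conj_comm].
  unfold wconj, wcomm; apply geq_sym.
  eapply geq_trans.
  { replace ((u ++ a ++ b ++ v) ++ winv v ++ (winv b ++ winv a ++ b ++ a) ++ v)
      with ((u ++ a ++ b) ++ v ++ winv v ++ (winv b ++ winv a ++ b ++ a ++ v))
      by (rewrite <- !app_assoc; reflexivity).
    apply geq_cancel_word. }
  eapply geq_trans.
  { replace ((u ++ a ++ b) ++ winv b ++ winv a ++ b ++ a ++ v)
      with ((u ++ a) ++ b ++ winv b ++ (winv a ++ b ++ a ++ v))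
      by (rewrite <- !app_assoc; reflexivity).
    apply geq_cancel_word. }
  rewrite <- app_assoc; apply geq_cancel_word.
Qed.

Definition gen_eq_dec (g h : gen) : {g = h} + {g <> h}.
Proof. decide equality. Defined.

Definition letter_eq_dec (l m : letter) : {l = m} + {l <> m}.
Proof. decide equality; [apply Bool.bool_dec | apply gen_eq_dec]. Defined.

Fixpoint exponent_sum (g : gen) (w : word) : Z :=
  match w with
  | [] => 0
  | (h, b) :: w' => (if gen_eq_dec g h then if b then -1 else 1 else 0) + exponent_sum g w'
  end%Z.

Lemma exponent_sum_app g a b : exponent_sum g (a ++ b) = (exponent_sum g a + exponent_sum g b)%Z.
Proof. induction a as [|[h c] a IH]; simpl; [reflexivity | rewrite IH; lia]. Qed.

Lemma exponent_sum_winv g w : exponent_sum g (winv w) = (- exponent_sum g w)%Z.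
Proof.
  induction w as [|[h c] w IH]; [reflexivity|].
  unfold winv in *; simpl; rewrite exponent_sum_app, IH; simpl.
  destruct (gen_eq_dec g h), c; cbn -[Z.add Z.opp]; lia.
Qed.

Lemma exponent_sum_without_inverse g b w :
  ~ In (g, negb b) w -> (0 <= (if b then -1 else 1) * exponent_sum g w)%Z.
Proof.
  induction w as [|[h c] w IH]; cbn [In exponent_sum]; intros Hn; [destruct b; lia|].
  specialize (IH (fun H => Hn (or_intror H))).
  destruct (gen_eq_dec g h) as [<-|]; [|destruct b; lia].
  destruct b, c; cbn [negb] in *; try lia; exfalso; apply Hn; left; reflexivity.
Qed.

Lemma inverse_letter_occurs g b w :
  exponent_sum g ((g, b) :: w) = 0%Z -> In (g, negb b) w.
Proof.
  intros H; destruct (in_dec letter_eq_dec (g, negb b) w) as [|Hn]; [assumption|].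
  apply exponent_sum_without_inverse in Hn; simpl in H.
  destruct (gen_eq_dec g g) as [_|]; [destruct b; lia | contradiction].
Qed.

Lemma in_derived_subgroup_of_exponent_sums_zero w :
  (forall g, exponent_sum g w = 0%Z) -> in_derived_subgroup w.
Proof.
  remember (length w) as n eqn:Hn; revert w Hn.
  induction n as [n IH] using (well_founded_induction lt_wf).
  intros [|[g b] w] Hn Hzero; [exists []; apply geq_refl|].
  destruct (in_split _ _ (inverse_letter_occurs g b w (Hzero g))) as [p [q ->]].
  assert (Hpq : in_derived_subgroup (p ++ q)).
  { apply (IH (length (p ++ q))); [subst n; simpl; rewrite !length_app; simpl; lia | reflexivity |].
    intros h; specialize (Hzero h); cbn [exponent_sum] in Hzero.
    rewrite exponent_sum_app in Hzero |- *; cbn [exponent_sum] in Hzero.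
    destruct (gen_eq_dec h g), b; cbn [negb] in Hzero; lia. }
  apply (in_derived_subgroup_swap [(g, b)] [inv_letter (g, b)] p q).
  exact (in_derived_subgroup_geq _ _ (geq_cancel [] (p ++ q) (g, b)) Hpq).
Qed.

Definition relator_at (i : nat) : word := nth i relators [].

Lemma relator_at_trivial i : geq (relator_at i) [].
Proof.
  unfold relator_at; destruct (Nat.lt_ge_cases i (length relators)) as [Hi|Hi].
  - pose proof (geq_rel [] [] (nth i relators []) (nth_In _ _ Hi)) as H.
    rewrite app_nil_r in H; exact H.
  - rewrite nth_overflow by exact Hi; apply geq_refl.
Qed.

(* A certificate lists relators (by index) together with an inversion flag. *)
Definition relator_product (cert : list (bool * nat)) : word :=
  concat (map (fun p : bool * nat =>
    if fst p then winv (relator_at (snd p)) else relator_at (snd p)) cert).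

Definition invert_certificate (cert : list (bool * nat)) : list (bool * nat) :=
  map (fun p : bool * nat => (negb (fst p), snd p)) cert.

Lemma relator_product_trivial cert : geq (relator_product cert) [].
Proof.
  induction cert as [|[[|] i] cert IH]; [apply geq_refl | |];
    apply (geq_app _ [] _ []); [apply geq_winv_trivial, relator_at_trivial | exact IH
                               | apply relator_at_trivial | exact IH].
Qed.

Lemma exponent_sum_invert_certificate g cert :
  exponent_sum g (relator_product (invert_certificate cert))
  = (- exponent_sum g (relator_product cert))%Z.
Proof.
  induction cert as [|[[|] i] cert IH]; [reflexivity | |];
    unfold relator_product in *; simpl; rewrite !exponent_sum_app, IH;
    rewrite ?exponent_sum_winv; lia.
Qed.

Lemma in_derived_subgroup_letter_of_certificate l cert :
  (forall g, exponent_sum g (l :: relator_product cert) = 0%Z) -> in_derived_subgroup [l].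
Proof.
  intros Hzero; apply (in_derived_subgroup_geq _ ([l] ++ relator_product cert)).
  - pose proof (geq_app [l] [l] _ _ (geq_refl _) (geq_sym _ _ (relator_product_trivial cert))) as H.
    rewrite app_nil_r in H; exact H.
  - apply in_derived_subgroup_of_exponent_sums_zero, Hzero.
Qed.

Lemma in_derived_subgroup_letter_inv g cert :
  (forall h, exponent_sum h ((g, false) :: relator_product cert) = 0%Z) ->
  in_derived_subgroup [(g, false)] /\ in_derived_subgroup [(g, true)].
Proof.
  intros Hzero; split; [exact (in_derived_subgroup_letter_of_certificate _ _ Hzero)|].
  apply (in_derived_subgroup_letter_of_certificate _ (invert_certificate cert)).
  intros h; specialize (Hzero h); simpl in Hzero |- *.
  rewrite exponent_sum_invert_certificate; destruct (gen_eq_dec h g); lia.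
Qed.

(* Certificates following the elimination x, then y, then t in the header;
   relator indices are positions in [relators]. *)
Lemma in_derived_subgroup_letter l : in_derived_subgroup [l].
Proof.
  destruct l as [g b].
  assert (H : in_derived_subgroup [(g, false)] /\ in_derived_subgroup [(g, true)]).
  { apply in_derived_subgroup_letter_inv with
      (cert := match g with
               | GX => [(false,7); (true,8); (false,0); (false,0)]
               | GY => [(true,2); (false,1); (false,8); (false,8); (false,8);
                        (true,7); (true,7); (true,7);
                        (true,0); (true,0); (true,0); (true,0); (true,0); (true,0)]
               | GT => [(false,7); (false,7); (false,1); (false,4); (false,4); (false,2);
                        (true,8); (true,8); (true,8);
                        (false,0); (false,0); (false,0); (false,0); (false,0); (false,0)]
               end).
    intros h; destruct g, h; vm_compute; reflexivity. }
  destruct b; apply H.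
Qed.

Theorem lemma5p2 : perfect_G.
Proof.
  intros w; induction w as [|l w IH].
  - exists []; apply geq_refl.
  - apply (in_derived_subgroup_app [l] w); [apply in_derived_subgroup_letter | exact IH].
Qed.
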